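(* For every integer $n\ge1$, $$\log_2(n+1)\le \kappa(n)\le \lceil \log_2(n+1)\rceil .$$ In particular $\kappa(n)=\log_2(n+1)$ whenever $n+1$ is a power of $2$.
   Context: $\Delta_n=\{t=(t_i)_{i=1}^{n+1}: t_i\ge0,\ \sum t_i=1\}$ is the standard $n$-simplex with vertices $e_1,\dots,e_{n+1}$. A function $f:C\to\mathbb{R}$ on a convex set $C$ is approximately convex if $f(tx+(1-t)y)\le tf(x)+(1-t)f(y)+1$ for all $x,y\in C$, $t\in[0,1]$. Let $\mathcal{F}_n$ be the set of all approximately convex $f:\Delta_n\to\mathbb{R}$ with $f(e_i)\le 0$ for $1\le i\le n+1$, and $\kappa(n)=\sup_{f\in\mathcal{F}_n}\sup_{x\in\Delta_n}f(x)$. $\lceil x\rceil$ denotes the least integer $\ge x$. *)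

From Stdlib Require Import Reals Lra.
From Coquelicot Require Import Coquelicot.
Open Scope R_scope.

(* Points of R^{n+1} are represented as t : nat -> R with coordinates
   t 0, ..., t n (coordinate i+1 of the paper is t i); coordinates
   beyond n are required to be 0 so that points of the simplex are
   uniquely represented. *)
Definition simplex (n : nat) (t : nat -> R) : Prop :=
  (forall i, (i <= n)%nat -> 0 <= t i) /\
  (forall i, (n < i)%nat -> t i = 0) /\
  sum_f_R0 t n = 1.

Definition vertex (i : nat) : nat -> R :=
  fun j => if Nat.eq_dec j i then 1 else 0.

Definition comb (s : R) (x y : nat -> R) : nat -> R :=
  fun i => s * x i + (1 - s) * y i.

Definition approx_convex (n : nat) (f : (nat -> R) -> R) : Prop :=
  forall x y s, simplex n x -> simplex n y -> 0 <= s <= 1 ->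
    f (comb s x y) <= s * f x + (1 - s) * f y + 1.

Definition F_class (n : nat) (f : (nat -> R) -> R) : Prop :=
  approx_convex n f /\ (forall i, (i <= n)%nat -> f (vertex i) <= 0).

Definition kappa (n : nat) : Rbar :=
  Lub_Rbar (fun y => exists f x, F_class n f /\ simplex n x /\ y = f x).

Definition log2 (x : R) : R := ln x / ln 2.

Definition ceil (x : R) : Z := (- Int_part (- x))%Z.

From Stdlib Require Import Reals Lra Lia ZArith FunctionalExtensionality.
From Coquelicot Require Import Coquelicot.
Open Scope R_scope.

(* Lower bound: the entropy [H x = - sum_i x_i log2 x_i] vanishes at the
   vertices and satisfies [H (s x + (1 - s) y) <= s H x + (1 - s) H y + h s],
   where the binary entropy [h s] is at most one bit; so [H] belongs to the
   class, and its value at the barycenter is [log2 (n + 1)].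
   Upper bound: a point of the simplex supported on a window of [2 ^ (k + 1)]
   consecutive coordinates is a convex combination of points supported on the
   two halves of the window, so by induction on [k] every [f] of the class is
   at most [k] on such points; a single window of length [2 ^ k >= n + 1]
   covers the whole simplex. *)

Lemma simplex_ge0 n x : simplex n x -> forall i, 0 <= x i.
Proof.
  intros [hge [hout _]] i.
  destruct (le_lt_dec i n) as [hi | hi]; [apply hge | rewrite hout]; auto; lra.
Qed.

Lemma sum_f_R0_ge0_eq0 u N : (forall i, 0 <= u i) -> (forall i, (N < i)%nat -> u i = 0) ->
  sum_f_R0 u N = 0 -> forall i, u i = 0.
Proof.
  intros hu hout hsum i. destruct (le_lt_dec i N) as [hi | hi]; [| auto].
  induction N as [| N IH]; simpl in hsum.
  - replace i with 0%nat by lia. exact hsum.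
  - assert (0 <= sum_f_R0 u N) by (apply cond_pos_sum; auto).
    assert (0 <= u (S N)) by auto.
    destruct (Nat.eq_dec i (S N)) as [-> | ne]; [lra |].
    apply IH; [intros j hj; destruct (Nat.eq_dec j (S N)) as [-> |]; [lra | apply hout; lia]
              | lra | lia].
Qed.

Lemma sum_f_R0_single u N a : (a <= N)%nat ->
  (forall i, (i <= N)%nat -> i <> a -> u i = 0) -> sum_f_R0 u N = u a.
Proof.
  intros ha hu. induction N as [| N IH]; simpl.
  - replace a with 0%nat by lia. reflexivity.
  - destruct (Nat.eq_dec a (S N)) as [-> | ne].
    + rewrite sum_eq_R0; [ring |]. intros; apply hu; lia.
    + rewrite IH, (hu (S N)); [ring | lia | lia | lia |].
      intros; apply hu; lia.
Qed.

Definition supported_in (a b : nat) (x : nat -> R) : Prop :=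
  forall i, (i < a \/ b <= i)%nat -> x i = 0.

Lemma simplex_supported_singleton n a x :
  simplex n x -> supported_in a (S a) x -> x = vertex a.
Proof.
  intros hx hsupp. destruct hx as [_ [hout hsum]].
  assert (hxa : x a = 1).
  { destruct (le_lt_dec a n) as [ha | ha].
    - rewrite <- hsum. symmetry. apply sum_f_R0_single; auto.
      intros i _ hi. apply hsupp. lia.
    - rewrite sum_eq_R0 in hsum; [lra |]. intros i hi. apply hsupp. lia. }
  apply functional_extensionality; intro j. unfold vertex.
  destruct (Nat.eq_dec j a) as [-> | ne]; [exact hxa |]. apply hsupp. lia.
Qed.

Lemma simplex_normalize n u :
  (forall i, 0 <= u i) -> (forall i, (n < i)%nat -> u i = 0) ->
  0 < sum_f_R0 u n -> simplex n (fun i => u i / sum_f_R0 u n).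
Proof.
  intros hge hout hpos. split; [| split].
  - intros i _. apply Rdiv_le_0_compat; auto.
  - intros i hi. rewrite hout by exact hi. unfold Rdiv; ring.
  - unfold Rdiv. rewrite <- scal_sum. field. lra.
Qed.

Lemma simplex_split n a p c x : (a <= p <= c)%nat ->
  simplex n x -> supported_in a c x ->
  supported_in a p x \/ supported_in p c x \/
  exists s y z, 0 <= s <= 1 /\ simplex n y /\ simplex n z /\
    supported_in a p y /\ supported_in p c z /\ x = comb s y z.
Proof.
  intros hp hx hsupp.
  assert (hge := simplex_ge0 n x hx). destruct hx as [_ [hout hsum]].
  set (low := fun i => if i <? p then x i else 0).
  set (high := fun i => if i <? p then 0 else x i).
  assert (low_ge : forall i, 0 <= low i)
    by (intro i; unfold low; destruct (i <? p); auto; lra).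
  assert (high_ge : forall i, 0 <= high i)
    by (intro i; unfold high; destruct (i <? p); auto; lra).
  assert (low_out : forall i, (n < i)%nat -> low i = 0)
    by (intros i hi; unfold low; rewrite hout; auto; destruct (i <? p); auto).
  assert (high_out : forall i, (n < i)%nat -> high i = 0)
    by (intros i hi; unfold high; rewrite hout; auto; destruct (i <? p); auto).
  assert (low_high : forall i, x i = low i + high i)
    by (intro i; unfold low, high; destruct (i <? p); ring).
  set (s := sum_f_R0 low n).
  assert (hmass : s + sum_f_R0 high n = 1).
  { unfold s. rewrite <- plus_sum, <- hsum. apply sum_eq. auto. }
  destruct (Req_dec s 0) as [hs0 | hs0].
  { right; left. intros i [hi | hi]; [| apply hsupp; lia].
    rewrite <- (sum_f_R0_ge0_eq0 low n low_ge low_out hs0 i). unfold low.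
    now replace (i <? p) with true by (symmetry; apply Nat.ltb_lt; lia). }
  destruct (Req_dec s 1) as [hs1 | hs1].
  { left. intros i [hi | hi]; [apply hsupp; lia |].
    rewrite <- (sum_f_R0_ge0_eq0 high n high_ge high_out ltac:(lra) i). unfold high.
    now replace (i <? p) with false by (symmetry; apply Nat.ltb_ge; lia). }
  assert (hs : 0 < s) by (assert (0 <= s) by (apply cond_pos_sum; auto); lra).
  assert (ht : 0 < sum_f_R0 high n)
    by (assert (0 <= sum_f_R0 high n) by (apply cond_pos_sum; auto); lra).
  right; right. exists s, (fun i => low i / s), (fun i => high i / sum_f_R0 high n).
  repeat split; try lra; try (apply simplex_normalize; auto).
  - intros i [hi | hi]; unfold low.
    + rewrite hsupp by lia. destruct (i <? p); unfold Rdiv; ring.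
    + replace (i <? p) with false by (symmetry; apply Nat.ltb_ge; lia). unfold Rdiv; ring.
  - intros i [hi | hi]; unfold high.
    + replace (i <? p) with true by (symmetry; apply Nat.ltb_lt; lia). unfold Rdiv; ring.
    + rewrite hsupp by lia. destruct (i <? p); unfold Rdiv; ring.
  - apply functional_extensionality; intro i. unfold comb.
    replace (1 - s) with (sum_f_R0 high n) by lra. rewrite low_high. field. lra.
Qed.

Lemma F_class_le_window n f k : F_class n f ->
  forall a x, simplex n x -> supported_in a (a + 2 ^ k) x -> f x <= INR k.
Proof.
  intros [hconv hvert]. induction k as [| k IH]; intros a x hx hsupp.
  - assert (hxv : x = vertex a).
    { apply (simplex_supported_singleton n); auto.
      now replace (S a) with (a + 2 ^ 0)%nat by (simpl; lia). }
    subst x. apply hvert. destruct (le_lt_dec a n) as [| ha]; auto.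
    destruct hx as [_ [hout _]]. specialize (hout a ha). unfold vertex in hout.
    destruct (Nat.eq_dec a a); [lra | congruence].
  - rewrite S_INR. assert (0 <= INR k) by apply pos_INR.
    replace (a + 2 ^ S k)%nat with (a + 2 ^ k + 2 ^ k)%nat in hsupp by (simpl; lia).
    destruct (simplex_split n a (a + 2 ^ k) (a + 2 ^ k + 2 ^ k) x ltac:(lia) hx hsupp)
      as [hlow | [hhigh | (s & y & z & hs & hy & hz & hsy & hsz & ->)]].
    + assert (f x <= INR k) by (apply (IH a); auto). lra.
    + assert (f x <= INR k) by (apply (IH (a + 2 ^ k)%nat); auto). lra.
    + assert (f y <= INR k) by (apply (IH a); auto).
      assert (f z <= INR k) by (apply (IH (a + 2 ^ k)%nat); auto).
      apply (Rle_trans _ _ _ (hconv y z s hy hz hs)).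
      assert (s * f y <= s * INR k) by (apply Rmult_le_compat_l; lra).
      assert ((1 - s) * f z <= (1 - s) * INR k) by (apply Rmult_le_compat_l; lra).
      lra.
Qed.

Lemma F_class_le_log n f k x : F_class n f -> simplex n x ->
  (n < 2 ^ k)%nat -> f x <= INR k.
Proof.
  intros hf hx hk. apply (F_class_le_window n f k hf 0 x hx).
  intros i [hi | hi]; [lia |]. destruct hx as [_ [hout _]]. apply hout. lia.
Qed.

(* [ln] is [0] on nonpositive arguments, which gives the convention
   [0 * ln 0 = 0] for free. *)
Lemma ln_0 : ln 0 = 0.
Proof. unfold ln. case Rlt_dec; intro h; [destruct (Rlt_irrefl _ h) | reflexivity]. Qed.

Lemma ln2_pos : 0 < ln 2.
Proof. generalize ln_lt_2; lra. Qed.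

Lemma xlnx_mul u v : 0 <= u -> 0 <= v ->
  (u * v) * ln (u * v) = v * (u * ln u) + u * (v * ln v).
Proof.
  intros hu hv.
  destruct (Req_dec u 0) as [-> | hu0]; [rewrite Rmult_0_l; ring |].
  destruct (Req_dec v 0) as [-> | hv0]; [rewrite Rmult_0_r; ring |].
  rewrite ln_mult by lra. ring.
Qed.

Lemma xlnx_superadditive u v : 0 <= u -> 0 <= v ->
  u * ln u + v * ln v <= (u + v) * ln (u + v).
Proof.
  intros hu hv.
  destruct (Req_dec u 0) as [-> | hu0]; [rewrite Rplus_0_l, ln_0; lra |].
  destruct (Req_dec v 0) as [-> | hv0]; [rewrite Rplus_0_r, ln_0; lra |].
  assert (u * ln u <= u * ln (u + v)) by (apply Rmult_le_compat_l, ln_le; lra).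
  assert (v * ln v <= v * ln (u + v)) by (apply Rmult_le_compat_l, ln_le; lra).
  lra.
Qed.

(* [ln y <= y - 1] at [y = 1 / (2 s)]; added at [s] and [1 - s] it bounds the
   binary entropy by [ln 2]. *)
Lemma neg_xlnx_le s : 0 < s -> - (s * ln s) <= s * ln 2 + / 2 - s.
Proof.
  intro hs. assert (hpos : 0 < / (2 * s)) by (apply Rinv_0_lt_compat; lra).
  assert (hln := exp_ineq1_le (ln (/ (2 * s)))). rewrite exp_ln in hln by exact hpos.
  rewrite ln_Rinv, ln_mult in hln by lra.
  assert (h : s * - (ln 2 + ln s) <= s * (/ (2 * s) - 1)) by (apply Rmult_le_compat_l; lra).
  replace (s * (/ (2 * s) - 1)) with (/ 2 - s) in h by (field; lra).
  lra.
Qed.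

Lemma binary_entropy_le_ln2 s : 0 <= s <= 1 ->
  - (s * ln s) - (1 - s) * ln (1 - s) <= ln 2.
Proof.
  intro hs. assert (hl := ln2_pos).
  destruct (Req_dec s 0) as [-> | hs0]; [rewrite Rminus_0_r, ln_1; lra |].
  destruct (Req_dec s 1) as [-> | hs1]; [rewrite Rminus_diag, ln_0, ln_1; lra |].
  generalize (neg_xlnx_le s ltac:(lra)) (neg_xlnx_le (1 - s) ltac:(lra)). lra.
Qed.

Lemma xlnx_comb_ge s u v : 0 <= s <= 1 -> 0 <= u -> 0 <= v ->
  s * ln s * u + s * (u * ln u) + ((1 - s) * ln (1 - s) * v + (1 - s) * (v * ln v))
  <= (s * u + (1 - s) * v) * ln (s * u + (1 - s) * v).
Proof.
  intros hs hu hv.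
  replace (s * ln s * u + s * (u * ln u) + ((1 - s) * ln (1 - s) * v + (1 - s) * (v * ln v)))
    with ((s * u) * ln (s * u) + ((1 - s) * v) * ln ((1 - s) * v))
    by (rewrite !xlnx_mul by lra; ring).
  apply xlnx_superadditive; apply Rmult_le_pos; lra.
Qed.

Definition neg_entropy (n : nat) (x : nat -> R) : R :=
  sum_f_R0 (fun i => x i * ln (x i)) n.

Lemma neg_entropy_comb_ge n s x y : 0 <= s <= 1 ->
  (forall i, 0 <= x i) -> (forall i, 0 <= y i) ->
  s * ln s * sum_f_R0 x n + s * neg_entropy n x
    + ((1 - s) * ln (1 - s) * sum_f_R0 y n + (1 - s) * neg_entropy n y)
  <= neg_entropy n (comb s x y).
Proof.
  intros hs hx hy. unfold neg_entropy, comb.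
  induction n as [| n IH]; simpl; [apply xlnx_comb_ge; auto |].
  generalize (xlnx_comb_ge s (x (S n)) (y (S n)) hs (hx _) (hy _)). lra.
Qed.

Definition entropy (n : nat) (x : nat -> R) : R := - neg_entropy n x / ln 2.

Lemma entropy_approx_convex n : approx_convex n (entropy n).
Proof.
  intros x y s hx hy hs. assert (hl := ln2_pos).
  assert (hcomb := neg_entropy_comb_ge n s x y hs (simplex_ge0 n x hx) (simplex_ge0 n y hy)).
  destruct hx as [_ [_ hx1]], hy as [_ [_ hy1]]. rewrite hx1, hy1 in hcomb.
  assert (hbin := binary_entropy_le_ln2 s hs).
  unfold entropy.
  replace (s * (- neg_entropy n x / ln 2) + (1 - s) * (- neg_entropy n y / ln 2) + 1)
    with ((ln 2 - s * neg_entropy n x - (1 - s) * neg_entropy n y) / ln 2)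
    by (field; lra).
  unfold Rdiv. apply Rmult_le_compat_r; [apply Rlt_le, Rinv_0_lt_compat |]; lra.
Qed.

Lemma entropy_vertex n i : entropy n (vertex i) = 0.
Proof.
  unfold entropy, neg_entropy. rewrite sum_eq_R0; [unfold Rdiv; ring |].
  intros j _. unfold vertex. destruct Nat.eq_dec; [rewrite ln_1 | rewrite ln_0]; ring.
Qed.

Lemma entropy_F_class n : F_class n (entropy n).
Proof.
  split; [apply entropy_approx_convex |]. intros i _. rewrite entropy_vertex. lra.
Qed.

Definition barycenter (n : nat) : nat -> R :=
  fun i => if Nat.leb i n then / (INR n + 1) else 0.

Lemma barycenter_simplex n : simplex n (barycenter n).
Proof.
  assert (hpos : 0 < INR n + 1) by (generalize (pos_INR n); lra).
  unfold barycenter. split; [| split].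
  - intros i hi. apply Nat.leb_le in hi. rewrite hi. apply Rlt_le, Rinv_0_lt_compat; lra.
  - intros i hi. destruct (Nat.leb_spec i n); [lia | reflexivity].
  - rewrite (sum_eq _ (fun _ => / (INR n + 1))).
    + rewrite sum_cte, S_INR. field. lra.
    + intros i hi. apply Nat.leb_le in hi. now rewrite hi.
Qed.

Lemma entropy_barycenter n : entropy n (barycenter n) = log2 (INR n + 1).
Proof.
  assert (hpos : 0 < INR n + 1) by (generalize (pos_INR n); lra).
  unfold entropy, neg_entropy, log2.
  rewrite (sum_eq _ (fun _ => / (INR n + 1) * ln (/ (INR n + 1)))).
  - rewrite sum_cte, S_INR, ln_Rinv by lra. field. generalize ln2_pos; lra.
  - intros i hi. unfold barycenter. apply Nat.leb_le in hi. now rewrite hi.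
Qed.

Lemma log2_pow2 k : log2 (2 ^ k) = INR k.
Proof.
  assert (hl := ln2_pos). unfold log2. rewrite ln_pow by lra. field. lra.
Qed.

Lemma log2_nonneg x : 1 <= x -> 0 <= log2 x.
Proof.
  intro hx. unfold log2. apply Rdiv_le_0_compat; [| exact ln2_pos].
  rewrite <- ln_1. apply ln_le; lra.
Qed.

Lemma le_pow2_of_log2_le N k : log2 (INR N) <= INR k -> (N <= 2 ^ k)%nat.
Proof.
  intro hlog. destruct (le_lt_dec N (2 ^ k)) as [| hlt]; [assumption | exfalso].
  assert (hl := ln2_pos).
  apply lt_INR in hlt. rewrite pow_INR in hlt. change (INR 2) with 2 in hlt.
  assert (hln : ln (2 ^ k) < ln (INR N)) by (apply ln_increasing; auto; apply pow_lt; lra).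
  rewrite ln_pow in hln by lra.
  assert (INR k < log2 (INR N)); [| lra].
  unfold log2. apply (Rmult_lt_reg_r (ln 2)); [exact hl |].
  unfold Rdiv. rewrite Rmult_assoc, Rinv_l; lra.
Qed.

Lemma ceil_ge x : x <= IZR (ceil x).
Proof.
  unfold ceil. destruct (base_Int_part (- x)). rewrite opp_IZR. lra.
Qed.

Lemma kappa_ge n f x : F_class n f -> simplex n x -> Rbar_le (f x) (kappa n).
Proof.
  intros hf hx. apply (proj1 (Lub_Rbar_correct _)). now exists f, x.
Qed.

Lemma kappa_le n B :
  (forall f x, F_class n f -> simplex n x -> f x <= B) -> Rbar_le (kappa n) B.
Proof.
  intro hB. apply (proj2 (Lub_Rbar_correct _)).
  intros y (f & x & hf & hx & ->). now apply hB.
Qed.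

Theorem mainTheorem2 (n : nat) (hn : (1 <= n)%nat) :
  Rbar_le (Finite (log2 (INR n + 1))) (kappa n) /\
  Rbar_le (kappa n) (Finite (IZR (ceil (log2 (INR n + 1))))) /\
  (forall k : nat, (n + 1 = 2 ^ k)%nat -> kappa n = Finite (log2 (INR n + 1))).
Proof.
  assert (hN : INR n + 1 = INR (n + 1)) by (rewrite plus_INR; reflexivity).
  assert (lower : Rbar_le (log2 (INR n + 1)) (kappa n)).
  { rewrite <- entropy_barycenter.
    apply kappa_ge; [apply entropy_F_class | apply barycenter_simplex]. }
  assert (upper : forall k, (n < 2 ^ k)%nat -> Rbar_le (kappa n) (INR k)).
  { intros k hk. apply kappa_le. intros f x hf hx. exact (F_class_le_log n f k x hf hx hk). }
  split; [exact lower | split].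
  - set (c := ceil (log2 (INR n + 1))).
    assert (hc : log2 (INR n + 1) <= IZR c) by apply ceil_ge.
    assert (hc0 : (0 <= c)%Z).
    { apply le_IZR. generalize (log2_nonneg (INR n + 1)) (pos_INR n). lra. }
    rewrite <- (Z2Nat.id c hc0), <- INR_IZR_INZ in hc |- *.
    apply upper. enough (n + 1 <= 2 ^ Z.to_nat c)%nat by lia.
    apply le_pow2_of_log2_le. now rewrite <- hN.
  - intros k hk. apply Rbar_le_antisym; [| exact lower].
    rewrite hN, hk, pow_INR, log2_pow2. apply upper. lia.
Qed.
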